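(* Let $R=R_A\,\dot\cup\,R_D$ be a finite set of $n=|R|$ resources partitioned into those of an attacker $A$ and those of all other entities $D$, and let $r=|R_A|/|R_D|$. Suppose each resource is online independently with probability $\rho$ (the steady state). Let $\phi_R$ be the random variable equal to the number of online resources in $R_A$ divided by the number of online resources in $R_D$. Then for every $\alpha\in(0,1/2)$, $$\Pr\left[\phi_R \ge \left(1+\frac{2\alpha}{1-\alpha}\right) r\right] < \left(\frac{e^{\alpha}}{(1+\alpha)^{1+\alpha}}\right)^{\rho n r/(1+r)} + \left(\frac{e^{-\alpha}}{(1-\alpha)^{1-\alpha}}\right)^{\rho n/(1+r)}.$$
   Context: In the steady state, each resource's online/offline status follows the stationary distribution of a two-state Markov chain with failure probability $p$ and recovery probability $q$, so it is online with probability $\rho=q/(p+q)$, independently of all other resources. *)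

From HB Require Import structures.
From mathcomp Require Import all_boot all_order all_algebra.
From mathcomp Require Import all_classical all_reals all_analysis.
Set Implicit Arguments. Unset Strict Implicit. Unset Printing Implicit Defensive.
Import Order.TTheory GRing.Theory Num.Theory.
Local Open Scope ring_scope.

Section ResourceModel.
Variables (R : realType) (T : finType).

(* An outcome: for every resource x : T, whether x is online (true) or not. *)
Definition outcome := {ffun T -> bool}.

Definition outcome_prob (rho : R) (w : outcome) : R :=
  \prod_(x : T) (if w x then rho else 1 - rho).

Definition Prob (rho : R) (E : pred outcome) : R :=
  \sum_(w : outcome | E w) outcome_prob rho w.

Definition num_online (A : {set T}) (w : outcome) : nat :=
  #|[set x in A | w x]|.

(* The event  phi_R >= t,  where phi_R = (#online in RA) / (#online in RD).
   Convention: when no resource of RD is online, phi_R = +oo, so the event holds. *)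
Definition phi_ge (RA RD : {set T}) (t : R) (w : outcome) : bool :=
  (num_online RD w == 0)%N ||
  (t <= (num_online RA w)%:R / (num_online RD w)%:R).

End ResourceModel.

(* If phi_R >= t r with t = (1 + alpha) / (1 - alpha), then either R_A has at
   least (1 + alpha) times its mean rho |R_A| of online resources, or R_D has at
   most (1 - alpha) times its mean rho |R_D|.  Each of these tails is bounded by
   Markov's inequality applied to (1 +- alpha)^X, whose expectation factorizes
   over the independent resources as (1 +- rho alpha)^|S| <= exp(+- rho alpha |S|);
   the lower tail is strict since R_D is nonempty. *)
From HB Require Import structures.
From mathcomp Require Import all_boot all_order all_algebra.
From mathcomp Require Import all_classical all_reals all_analysis.
From mathcomp Require Import ring lra.
Set Implicit Arguments. Unset Strict Implicit. Unset Printing Implicit Defensive.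
Import Order.TTheory GRing.Theory Num.Theory.
Local Open Scope ring_scope.

Section Expectation.
Variables (R : realType) (T : finType).

Definition expectation (rho : R) (f : outcome T -> R) : R :=
  \sum_(w : outcome T) outcome_prob rho w * f w.

Lemma outcome_prob_ge0 (rho : R) (w : outcome T) :
  0 <= rho <= 1 -> 0 <= outcome_prob rho w.
Proof.
by case/andP=> rho0 rho1; apply: prodr_ge0 => x _; case: (w x); rewrite ?subr_ge0.
Qed.

Lemma Prob_le_expectation (rho : R) (E : pred (outcome T)) (f : outcome T -> R) :
  0 <= rho <= 1 -> (forall w, 0 <= f w) -> (forall w, E w -> 1 <= f w) ->
  Prob rho E <= expectation rho f.
Proof.
move=> rho01 f0 Ef; rewrite /Prob big_mkcond /=; apply: ler_sum => w _.
have P0 := outcome_prob_ge0 w rho01.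
by case: ifP => [/Ef/(ler_wpM2l P0)|_]; rewrite ?mulr1 ?mulr_ge0.
Qed.

Lemma expectationD (rho : R) (f g : outcome T -> R) :
  expectation rho (fun w => f w + g w) = expectation rho f + expectation rho g.
Proof. by rewrite /expectation -big_split; apply: eq_bigr => w _; rewrite mulrDr. Qed.

Lemma expectation_pow_num_online (S : {set T}) (rho s : R) :
  expectation rho (fun w => s ^+ num_online S w) = (rho * s + (1 - rho)) ^+ #|S|.
Proof.
pose g x (b : bool) := (if b then rho else 1 - rho) * (if b && (x \in S) then s else 1).
have gE w : outcome_prob rho w * s ^+ num_online S w = \prod_(x : T) g x (w x).
  rewrite big_split /= /num_online; congr (_ * _).
  by rewrite -prodr_const big_mkcond; apply: eq_bigr => x _; rewrite inE andbC.
rewrite /expectation (eq_bigr _ (fun w _ => gE w)) -(bigA_distr_bigA g).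
rewrite -prodr_const [RHS]big_mkcond; apply: eq_bigr => x _; rewrite big_bool /g /=.
by case: (x \in S); rewrite /= ?mulr1 ?mulr0 ?addr0 // addrC subrK.
Qed.

End Expectation.

Lemma powR_div (R : realType) (x y z : R) :
  0 <= x -> 0 < y -> (x / y) `^ z = x `^ z / y `^ z.
Proof.
move=> x0 y0; apply: (mulIf (lt0r_neq0 (powR_gt0 z y0))).
by rewrite -powRM ?divr_ge0 ?(ltW y0) // !divfK ?lt0r_neq0 ?powR_gt0.
Qed.

Section Chernoff.
Variables (R : realType) (T : finType) (S : {set T}) (rho delta : R).
Hypotheses (rho01 : 0 <= rho <= 1) (delta_gt : 0 < 1 + delta).

Let mean : R := rho * #|S|%:R.

(* For [delta > 0] (resp. [delta < 0]) this is at least 1 on the upper (resp.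
   lower) tail around [(1 + delta) * mean]; it is [s ^+ X] for the optimal
   Chernoff parameter [s = 1 + delta], rescaled. *)
Definition chernoff_weight (w : outcome T) : R :=
  (1 + delta) `^ ((num_online S w)%:R - (1 + delta) * mean).

Lemma chernoff_weight_ge1 (w : outcome T) :
  0 <= delta * ((num_online S w)%:R - (1 + delta) * mean) -> 1 <= chernoff_weight w.
Proof.
move=> e_sign; suff : (1 + delta) `^ 0 <= chernoff_weight w by rewrite powRr0.
rewrite /chernoff_weight; move: e_sign.
have [delta0|delta0|->] := ltgtP delta 0.
- rewrite nmulr_rge0 // => e_le0; apply: ger_powR => //.
  by rewrite delta_gt gerDl ltW.
- rewrite pmulr_rge0 // => e_ge0; apply: ler_powR => //.
  by rewrite lerDl ltW.
- by rewrite addr0 powR1.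
Qed.

Let one_add_rho_delta_ge0 : 0 <= 1 + rho * delta.
Proof.
case/andP: rho01 => rho0 rho1; have := mulr_ge0 rho0 (ltW delta_gt); nra.
Qed.

Lemma expectation_chernoff_weight :
  expectation rho chernoff_weight =
  (1 + rho * delta) ^+ #|S| / (1 + delta) `^ ((1 + delta) * mean).
Proof.
have d0 : 1 + delta != 0 := lt0r_neq0 delta_gt.
rewrite /expectation /chernoff_weight.
under eq_bigr => w _ do rewrite powRB ?d0 ?implybT // powR_mulrn ?(ltW delta_gt) // mulrA.
rewrite -big_distrl /=.
have := expectation_pow_num_online S rho (1 + delta); rewrite /expectation => ->.
by congr (_ ^+ _ / _); ring.
Qed.

Lemma chernoff_factorE :
  (expR delta / (1 + delta) `^ (1 + delta)) `^ mean =
  expR (rho * delta) ^+ #|S| / (1 + delta) `^ ((1 + delta) * mean).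
Proof.
rewrite powR_div ?expR_ge0 ?powR_gt0 // -powRrM -expRM /mean.
by rewrite mulrA [delta * rho]mulrC -expRM_natr.
Qed.

Lemma chernoff_bound :
  expectation rho chernoff_weight <= (expR delta / (1 + delta) `^ (1 + delta)) `^ mean.
Proof.
rewrite expectation_chernoff_weight chernoff_factorE ler_pM2r ?invr_gt0 ?powR_gt0 //.
by apply: lerXn2r; rewrite ?nnegrE ?expR_ge0 ?expR_ge1Dx.
Qed.

Lemma chernoff_bound_lt :
  delta != 0 -> 0 < rho -> (0 < #|S|)%N ->
  expectation rho chernoff_weight < (expR delta / (1 + delta) `^ (1 + delta)) `^ mean.
Proof.
move=> delta0 rho0 S0.
rewrite expectation_chernoff_weight chernoff_factorE ltr_pM2r ?invr_gt0 ?powR_gt0 //.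
rewrite ltrXn2r -?lt0n ?nnegrE ?expR_ge0 //.
exact: expR_gt1Dx (mulf_neq0 (lt0r_neq0 rho0) delta0).
Qed.

End Chernoff.

Lemma phi_ge_tails (R : realType) (T : finType) (RA RD : {set T}) (t c : R)
    (w : outcome T) :
  0 <= t -> 0 < c -> phi_ge RA RD t w ->
  t * c <= (num_online RA w)%:R \/ (num_online RD w)%:R <= c.
Proof.
move=> t0 c0; rewrite /phi_ge; set X := num_online RA w; set Y := num_online RD w.
have [Yc|cY] := lerP Y%:R c; first by right.
have Y0 : 0 < Y%:R := lt_trans c0 cY.
rewrite eqn0Ngt -(ltr0n R) Y0 /= ler_pdivlMr // => tY; left.
by apply: le_trans tY; rewrite ler_wpM2l // ltW.
Qed.

Theorem lemma1 (R : realType) (T : finType) (RA RD : {set T}) (p q alpha : R) :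
  [disjoint RA & RD] -> RA :|: RD = [set: T] -> (0 < #|RD|)%N ->
  0 < p < 1 -> 0 < q < 1 -> 0 < alpha < 1 / 2 ->
  let rho := q / (p + q) in
  let n : R := #|T|%:R in
  let r : R := #|RA|%:R / #|RD|%:R in
  Prob rho (phi_ge RA RD ((1 + 2 * alpha / (1 - alpha)) * r)) <
    (expR alpha / (1 + alpha) `^ (1 + alpha)) `^ (rho * n * r / (1 + r)) +
    (expR (- alpha) / (1 - alpha) `^ (1 - alpha)) `^ (rho * n / (1 + r)).
Proof.
move=> disj cover RD0 /andP[p0 _] /andP[q0 _] /andP[alpha0 alpha_lt]; cbv zeta.
set rho := q / (p + q); set n : R := #|T|%:R; set r : R := #|RA|%:R / #|RD|%:R.
have rho0 : 0 < rho by rewrite divr_gt0 // addr_gt0.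
have rho01 : 0 <= rho <= 1 by rewrite ltW //= ler_pdivrMr ?addr_gt0 // mul1r lerDr ltW.
have d0 : 0 < #|RD|%:R :> R by rewrite ltr0n.
have nE : n = #|RA|%:R + #|RD|%:R.
  by rewrite /n -cardsT -cover cardsU (disjoint_setI0 disj) cards0 subn0 natrD.
have expA : rho * n * r / (1 + r) = rho * #|RA|%:R.
  by rewrite nE /r; field; rewrite !gt_eqF // ltr_wpDr.
have expD : rho * n / (1 + r) = rho * #|RD|%:R.
  by rewrite nE /r; field; rewrite !gt_eqF // ltr_wpDr.
rewrite expA expD.
set t : R := (1 + 2 * alpha / (1 - alpha)) * r.
set c : R := (1 - alpha) * (rho * #|RD|%:R).
have t0 : 0 <= t.
  by rewrite /t mulr_ge0 ?divr_ge0 ?addr_ge0 ?divr_ge0 //; lra.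
have c0 : 0 < c by rewrite /c mulr_gt0 ?(mulr_gt0 rho0 d0) //; lra.
have tc : t * c = (1 + alpha) * (rho * #|RA|%:R).
  by rewrite /t /c /r; field; rewrite gt_eqF //= subr_eq0 gt_eqF //; lra.
pose f w := chernoff_weight RA rho alpha w + chernoff_weight RD rho (- alpha) w.
apply: (@le_lt_trans _ _ (expectation rho f)).
  apply: Prob_le_expectation => // [w|w /(phi_ge_tails t0 c0)[tail|tail]].
  - by rewrite addr_ge0 ?powR_ge0.
  - rewrite -[1]addr0; apply: lerD; last exact: powR_ge0.
    by apply: chernoff_weight_ge1; [lra | rewrite mulr_ge0 ?(ltW alpha0) // subr_ge0 -tc].
  - rewrite -[1]add0r; apply: lerD; first exact: powR_ge0.
    by apply: chernoff_weight_ge1; [lra | rewrite nmulr_rge0 ?oppr_lt0 // subr_le0].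
rewrite expectationD; apply: ler_ltD; first by apply: chernoff_bound => //; lra.
by apply: chernoff_bound_lt => //; rewrite ?oppr_eq0 ?gt_eqF //; lra.
Qed.
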